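(* Let $C$ be a Pauli-Square-Root Clifford and $P$ a Pauli, both acting on the same $t$ qubits. Then there is a $t$-qubit Pauli $Q$ such that $$C(C)\,(I\otimes P)=C(Q)\,(I\otimes P)\,C(C),$$ where the first tensor factor is a single control qubit; moreover $Q$ either commutes or anticommutes with $C$, and $\mathrm{Supp}(Q)\subseteq\mathrm{Supp}(C)$.
   Context: Paulis are tensor products of $I,X,Y,Z$ times a phase in $\{\pm1,\pm i\}$; a Clifford is a unitary mapping Paulis to Paulis under conjugation. A Pauli-Square-Root Clifford (PSC) is a Clifford that is not a Pauli and whose square is a Pauli. For a unitary $U$ on $t$ qubits, $C(U)=|0\rangle\langle0|\otimes I+|1\rangle\langle1|\otimes U$ on $1+t$ qubits (control first). $\mathrm{Supp}(W)$ denotes the set of qubits on which an operator $W$ acts nontrivially. *)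

(* Scalars: an arbitrary numClosedFieldType K (e.g. algC or R[i]);
   t-qubit operators are 'M[K]_(2^t); qubit j <-> bit j of the basis index. *)
From HB Require Import structures.
From mathcomp Require Import all_boot all_order all_algebra.
Set Implicit Arguments. Unset Strict Implicit. Unset Printing Implicit Defensive.
Import Order.TTheory GRing.Theory Num.Theory.
Local Open Scope ring_scope.

Section Qubits.
Variable K : numClosedFieldType.

Definition qbit (j i : nat) : bool := odd (i %/ 2 ^ j).
Definition qclear (j i : nat) : nat := (i - qbit j i * 2 ^ j)%N.

(* single-qubit Paulis: 0 = I, 1 = X, 2 = Y, 3 = Z; entry <a| sigma |b> *)
Definition sigma (k : 'I_4) (a b : bool) : K :=
  match val k with
  | 0%N => (a == b)%:R
  | 1%N => (a != b)%:R
  | 2%N => if a == b then 0 else if a then 'i else - 'i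
  | _ => if a == b then (if a then -1 else 1) else 0
  end.

Definition pauli_string (t : nat) (p : 'I_t -> 'I_4) : 'M[K]_(2 ^ t) :=
  \matrix_(i, k) \prod_(j < t) sigma (p j) (qbit j i) (qbit j k).

Definition is_pauli (t : nat) (W : 'M[K]_(2 ^ t)) : Prop :=
  exists (c : K) (p : 'I_t -> 'I_4),
    c \in [:: 1; -1; 'i; - 'i] /\ W = c *: pauli_string p.

Definition adjmx (n : nat) (U : 'M[K]_n) : 'M[K]_n := (map_mx Num.conj U)^T.

Definition unitary (n : nat) (U : 'M[K]_n) : Prop := U *m adjmx U = 1%:M.

Definition is_clifford (t : nat) (U : 'M[K]_(2 ^ t)) : Prop :=
  unitary U /\ forall P : 'M[K]_(2 ^ t), is_pauli P -> is_pauli (U *m P *m adjmx U).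

Definition is_psc (t : nat) (U : 'M[K]_(2 ^ t)) : Prop :=
  is_clifford U /\ ~ is_pauli U /\ is_pauli (U *m U).

(* W acts trivially on qubit j: W = I_j (x) W' for some operator W' on the other qubits *)
Definition acts_trivially_on (t : nat) (W : 'M[K]_(2 ^ t)) (j : nat) : Prop :=
  exists W' : nat -> nat -> K, forall i k : 'I_(2 ^ t),
    W i k = (qbit j i == qbit j k)%:R * W' (qclear j i) (qclear j k).

Definition in_supp (t : nat) (W : 'M[K]_(2 ^ t)) (j : 'I_t) : Prop :=
  ~ acts_trivially_on W j.

(* C(U) = |0><0| (x) I + |1><1| (x) U, control qubit first *)
Definition ctrl (t : nat) (U : 'M[K]_(2 ^ t)) : 'M[K]_(2 ^ t + 2 ^ t) :=
  block_mx 1%:M 0 0 U.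

(* I (x) W, identity on the control qubit *)
Definition idtens (t : nat) (W : 'M[K]_(2 ^ t)) : 'M[K]_(2 ^ t + 2 ^ t) :=
  block_mx W 0 0 W.
End Qubits.

From mathcomp Require Import all_boot all_order all_algebra zify ring.
Set Implicit Arguments. Unset Strict Implicit. Unset Printing Implicit Defensive.
Import GRing.Theory Num.Theory.
Local Open Scope ring_scope.

(* Take for Q the group commutator C P C^† P^†.  Then Q P C = C P, which is the
   block identity for the controlled gates, and Q is a Pauli because the
   Clifford C conjugates P to a Pauli.  Since C^2 is a Pauli it commutes or
   anticommutes with P, so C Q = C^2 P C^† P^† = ± P C P^† = ± Q^† C, and
   Q^† = ± Q as for every Pauli.  Finally an operator acts trivially on qubit j
   iff it commutes with X_j and Z_j; if C does, then so does Q, because the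
   signs picked up by P and P^† when moving X_j or Z_j across them cancel. *)

Section QubitIndices.
Local Open Scope nat_scope.

Lemma qbit0 i : qbit 0 i = odd i.
Proof. by rewrite /qbit expn0 divn1. Qed.

Lemma qbitS l i : qbit l.+1 i = qbit l i./2.
Proof. by rewrite /qbit expnS divnMA divn2. Qed.

Lemma odd_bit_double (b : bool) h : odd (b + h.*2) = b.
Proof. by rewrite oddD odd_double addbF; case: b. Qed.

Lemma bit_double_ind (P : nat -> Prop) :
  (forall (b : bool) h, P (b + h.*2)) -> forall i, P i.
Proof. by move=> H i; rewrite -(odd_double_half i); apply: H. Qed.

Lemma eq_qbits t i k : i < 2 ^ t -> k < 2 ^ t ->
  (forall l, l < t -> qbit l i = qbit l k) -> i = k.
Proof.
elim: t i k => [|t IH] i k.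
  by rewrite expn0 !ltnS !leqn0 => /eqP-> /eqP->.
move=> lt_i lt_k eq_ik.
rewrite -(odd_double_half i) -(odd_double_half k).
have := eq_ik 0 isT; rewrite !qbit0 => ->.
congr (_ + _.*2); apply: IH; rewrite ?ltn_half_double -?muln2 -?expnSr //.
by move=> l lt_lt; rewrite -!qbitS; apply: eq_ik.
Qed.

Definition qflip j i := if qbit j i then i - 2 ^ j else i + 2 ^ j.

Lemma qflip0 (b : bool) h : qflip 0 (b + h.*2) = ~~ b + h.*2.
Proof. rewrite /qflip qbit0 odd_bit_double expn0; case: b => /=; lia. Qed.

Lemma qflipS j (b : bool) h : qflip j.+1 (b + h.*2) = b + (qflip j h).*2.
Proof.
rewrite /qflip qbitS half_bit_double expnS.
case bit_j: (qbit j h); last lia.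
suff : 2 ^ j <= h by lia.
by move: bit_j; rewrite /qbit -(divn_gt0 _ (expn_gt0 2 j)); case: (h %/ 2 ^ j).
Qed.

Lemma qbit_qflip j i l :
  qbit l (qflip j i) = if l == j then ~~ qbit j i else qbit l i.
Proof.
elim: j i l => [|j IH] i [|l]; move: i; apply: bit_double_ind => b h;
  rewrite ?qflip0 ?qflipS ?qbit0 ?odd_bit_double //.
- by rewrite !qbitS !half_bit_double.
- by rewrite !qbitS !half_bit_double IH eqSS.
Qed.

Lemma qflip_lt t j i : j < t -> i < 2 ^ t -> qflip j i < 2 ^ t.
Proof.
elim: j t i => [|j IH] [|t] // i lt_jt; move: i; apply: bit_double_ind => b h.
  by rewrite qflip0 expnS; case: b => /=; lia.
rewrite qflipS expnS => lt_bh.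
have lt_h : h < 2 ^ t by move: lt_bh; case: b => /=; lia.
by have := IH t h lt_jt lt_h; move: lt_bh; case: b => /=; lia.
Qed.

Lemma qflipK j : involutive (qflip j).
Proof.
elim: j => [|j IH]; apply: bit_double_ind => b h; first by rewrite !qflip0 negbK.
by rewrite !qflipS IH.
Qed.

Lemma qclearE j i : qclear j i = if qbit j i then qflip j i else i.
Proof. by rewrite /qclear /qflip; case: (qbit j i); rewrite ?mul1n ?mul0n ?subn0. Qed.

Lemma qclear_qflip j i : qclear j (qflip j i) = qclear j i.
Proof.
by rewrite !qclearE qbit_qflip eqxx; case: (qbit j i); rewrite //= qflipK.
Qed.

End QubitIndices.

Section PauliStrings.
Variable K : numClosedFieldType.

Lemma sum_prod_qbit t (F : 'I_t -> bool -> K) :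
  \sum_(k < 2 ^ t) \prod_(j < t) F j (qbit j k) =
  \prod_(j < t) \sum_(b : bool) F j b.
Proof.
rewrite bigA_distr_bigA /=.
pose bits (k : 'I_(2 ^ t)) := [ffun j : 'I_t => qbit j k].
have bits_inj : injective bits.
  move=> x y /ffunP eq_xy; apply/val_inj/(eq_qbits (ltn_ord x) (ltn_ord y)).
  by move=> l lt_lt; have := eq_xy (Ordinal lt_lt); rewrite !ffunE.
have bits_bij : bijective bits.
  by apply: (inj_card_bij bits_inj); rewrite card_ffun card_bool !card_ord.
rewrite (reindex bits) /=; last exact: onW_bij.
by apply: eq_bigr => k _; apply: eq_bigr => j _; rewrite ffunE.
Qed.

Lemma prodr_bool I (r : seq I) (b : I -> bool) :
  \prod_(j <- r) (b j)%:R = (all b r)%:R :> K.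
Proof.
elim: r => [|j r IH]; first by rewrite big_nil.
by rewrite big_cons IH /=; case: (b j); rewrite ?mul1r ?mul0r.
Qed.

Definition sigma_mul_index (a b : 'I_4) : 'I_4 :=
  match val a, val b with
  | 0, _ => b | _, 0 => a
  | 1, 2 => inord 3 | 2, 1 => inord 3
  | 2, 3 => inord 1 | 3, 2 => inord 1
  | 3, 1 => inord 2 | 1, 3 => inord 2
  | _, _ => ord0 end%N.

Definition sigma_mul_phase (a b : 'I_4) : nat :=
  match val a, val b with
  | 1, 2 => 1 | 2, 1 => 3
  | 2, 3 => 1 | 3, 2 => 3
  | 3, 1 => 1 | 1, 3 => 3
  | _, _ => 0 end%N.

Lemma sigma_mul (a b : 'I_4) x y :
  \sum_(m : bool) sigma K a x m * sigma K b m y =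
  'i ^+ sigma_mul_phase a b * sigma K (sigma_mul_index a b) x y.
Proof.
rewrite big_bool.
case: a => [[|[|[|[|a]]]] Ha] //; case: b => [[|[|[|[|b]]]] Hb] //;
  case: x; case: y; rewrite /sigma /sigma_mul_index /sigma_mul_phase /= ?inordK //=;
  by rewrite ?(mulrN, mulNr, mulr1, mul1r, mulr0, mul0r, addr0, add0r, opprK,
               oppr0, mulCii, expr0, exprS).
Qed.

Lemma sigma_mul_indexC a b : sigma_mul_index a b = sigma_mul_index b a.
Proof.
by case: a => [[|[|[|[|a]]]] Ha] //; case: b => [[|[|[|[|b]]]] Hb] //; apply/val_inj.
Qed.

Lemma sigma_mul_indexxx a : sigma_mul_index a a = ord0.
Proof. by case: a => [[|[|[|[|a]]]] Ha] //; apply/val_inj. Qed.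

Lemma sigma_mul_phasexx a : sigma_mul_phase a a = 0%N.
Proof. by case: a => [[|[|[|[|a]]]] Ha]. Qed.

(* Commuting factors have equal phases; anticommuting ones have phases 1 and 3. *)
Lemma sigma_mul_phaseC a b :
  'i ^+ sigma_mul_phase a b =
  (-1) ^+ (sigma_mul_phase a b != sigma_mul_phase b a) * 'i ^+ sigma_mul_phase b a :> K.
Proof.
case: a => [[|[|[|[|a]]]] Ha] //; case: b => [[|[|[|[|b]]]] Hb] //;
  by rewrite /sigma_mul_phase /= ?(mulN1r, mul1r, expr0, expr1, exprS, opprK,
                                   mulCii, mulrN, mulr1).
Qed.

Lemma conj_sigma (a : 'I_4) x y : (sigma K a x y)^* = sigma K a y x.
Proof.
case: a => [[|[|[|[|a]]]] Ha] //; case: x; case: y;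
  rewrite /sigma /= ?rmorphN ?conjCi ?rmorph1 ?rmorph0 ?opprK //.
all: by apply/eqP; rewrite eqr_oppLR; apply/eqP; exact: conjCi.
Qed.

Lemma pauli_stringE t (p : 'I_t -> 'I_4) i k :
  pauli_string K p i k = \prod_(j < t) sigma K (p j) (qbit j i) (qbit j k).
Proof. by rewrite mxE. Qed.

Lemma eq_pauli_string t (p q : 'I_t -> 'I_4) :
  p =1 q -> pauli_string K p = pauli_string K q.
Proof.
move=> eq_pq; apply/matrixP => i k; rewrite !pauli_stringE.
by apply: eq_bigr => j _; rewrite eq_pq.
Qed.

Lemma pauli_stringM t (p q : 'I_t -> 'I_4) :
  pauli_string K p *m pauli_string K q =
  'i ^+ (\sum_j sigma_mul_phase (p j) (q j)) *:
    pauli_string K (fun j => sigma_mul_index (p j) (q j)).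
Proof.
apply/matrixP => i k; rewrite !mxE.
under [LHS]eq_bigr do rewrite !pauli_stringE -big_split /=.
rewrite (sum_prod_qbit (fun j b => sigma K (p j) (qbit j i) b * sigma K (q j) b (qbit j k))).
under [LHS]eq_bigr do rewrite sigma_mul.
by rewrite big_split /= prodrXr.
Qed.

Lemma pauli_string0 t : pauli_string K (fun _ : 'I_t => ord0) = 1%:M.
Proof.
apply/matrixP => i k; rewrite !mxE prodr_bool; congr (nat_of_bool _)%:R.
apply/allP/eqP => [eq_ik|-> j //].
apply/val_inj/(eq_qbits (ltn_ord i) (ltn_ord k)) => l lt_lt.
exact/eqP/(eq_ik (Ordinal lt_lt) (mem_index_enum _)).
Qed.

Lemma adjmxM n (A B : 'M[K]_n) : adjmx (A *m B) = adjmx B *m adjmx A.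
Proof. by rewrite /adjmx map_mxM trmx_mul. Qed.

Lemma adjmxZ n c (A : 'M[K]_n) : adjmx (c *: A) = c^* *: adjmx A.
Proof. by apply/matrixP => i j; rewrite !mxE rmorphM. Qed.

Lemma adjmxK n : involutive (@adjmx K n).
Proof. by move=> A; apply/matrixP => i j; rewrite !mxE conjCK. Qed.

Lemma unitaryV n (U : 'M[K]_n) : unitary U -> adjmx U *m U = 1%:M.
Proof. exact: mulmx1C. Qed.

Lemma adjmx_pauli_string t (p : 'I_t -> 'I_4) :
  adjmx (pauli_string K p) = pauli_string K p.
Proof.
by apply/matrixP => i k; rewrite !mxE rmorph_prod; apply: eq_bigr => j _; apply: conj_sigma.
Qed.

Definition ipauli t (W : 'M[K]_(2 ^ t)) :=
  exists n p, W = 'i ^+ n *: pauli_string K p.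

Lemma expr3i : 'i ^+ 3 = - 'i :> K.
Proof. by rewrite exprS sqrCi mulrN1. Qed.

Lemma expr4i : 'i ^+ 4 = 1 :> K.
Proof. by rewrite (exprM _ 2 2) sqrCi sqrrN expr1n. Qed.

Lemma conj_expri n : ('i ^+ n)^* = (- 'i) ^+ n :> K.
Proof. by rewrite rmorphXn; congr (_ ^+ _); apply: conjCi. Qed.

Lemma is_pauliP t (W : 'M[K]_(2 ^ t)) : is_pauli W <-> ipauli W.
Proof.
split.
  case=> c [p [c_phase ->]]; move: c_phase; rewrite !inE => /or4P [] /eqP ->.
  - by exists 0%N, p; rewrite expr0.
  - by exists 2%N, p; rewrite sqrCi.
  - by exists 1%N, p; rewrite expr1.
  - by exists 3%N, p; rewrite expr3i.
case=> n [p ->]; exists ('i ^+ n), p; split => //.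
rewrite (divn_eq n 4) exprD mulnC exprM expr4i expr1n mul1r.
have : (n %% 4 < 4)%N by rewrite ltn_pmod.
by case: (n %% 4)%N => [|[|[|[|m]]]] // _;
  rewrite !inE ?expr0 ?expr1 ?sqrCi ?expr3i eqxx ?orbT.
Qed.

Lemma ipauliM t (A B : 'M[K]_(2 ^ t)) : ipauli A -> ipauli B -> ipauli (A *m B).
Proof.
case=> n [p ->] [m [q ->]].
exists (n + m + \sum_j sigma_mul_phase (p j) (q j))%N.
exists (fun j => sigma_mul_index (p j) (q j)).
by rewrite -scalemxAl -scalemxAr pauli_stringM !scalerA -!exprD.
Qed.

Lemma ipauli_adj t (A : 'M[K]_(2 ^ t)) : ipauli A -> ipauli (adjmx A).
Proof.
case=> n [p ->]; exists (3 * n)%N, p.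
by rewrite adjmxZ adjmx_pauli_string conj_expri exprM expr3i.
Qed.

Lemma adjmx_ipauli t (A : 'M[K]_(2 ^ t)) :
  ipauli A -> exists m, adjmx A = (-1) ^+ m *: A.
Proof.
case=> n [p ->]; exists n.
by rewrite adjmxZ adjmx_pauli_string conj_expri scalerA -exprMn mulN1r.
Qed.

Lemma ipauli_unitary t (A : 'M[K]_(2 ^ t)) : ipauli A -> unitary A.
Proof.
case=> n [p ->]; rewrite /unitary adjmxZ adjmx_pauli_string conj_expri.
rewrite -scalemxAl -scalemxAr pauli_stringM !scalerA -exprMn mulrN mulCii opprK.
rewrite expr1n mul1r big1 ?expr0 ?scale1r => [|j _]; last exact: sigma_mul_phasexx.
rewrite (@eq_pauli_string _ _ (fun _ => ord0)) ?pauli_string0 // => j.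
exact: sigma_mul_indexxx.
Qed.

Lemma ipauli_comm t (A B : 'M[K]_(2 ^ t)) :
  ipauli A -> ipauli B -> exists m, A *m B = (-1) ^+ m *: (B *m A).
Proof.
case=> n [p ->] [m [q ->]].
exists (\sum_j (sigma_mul_phase (p j) (q j) != sigma_mul_phase (q j) (p j)))%N.
rewrite -!(scalemxAl, scalemxAr) !pauli_stringM.
rewrite (@eq_pauli_string _ (fun j => sigma_mul_index (q j) (p j))
                            (fun j => sigma_mul_index (p j) (q j))) => [|j];
  last exact: sigma_mul_indexC.
rewrite !scalerA -!prodrXr; congr (_ *: _).
under eq_bigr do rewrite sigma_mul_phaseC.
by rewrite big_split /= prodrXr; ring.
Qed.

End PauliStrings.

Section SingleQubitOperators.
Variables (K : numClosedFieldType) (t : nat) (j : 'I_t).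

Definition qubit_pauli (a : 'I_4) : 'M[K]_(2 ^ t) :=
  pauli_string K (fun l => if l == j then a else ord0).

Local Notation X := (qubit_pauli (@Ordinal 4 1 isT)).
Local Notation Z := (qubit_pauli (@Ordinal 4 3 isT)).

Lemma ipauli_qubit a : ipauli (qubit_pauli a).
Proof. by exists 0%N, (fun l => if l == j then a else ord0); rewrite scale1r. Qed.

Definition qflip_ord (k : 'I_(2 ^ t)) : 'I_(2 ^ t) :=
  Ordinal (qflip_lt (ltn_ord j) (ltn_ord k)).

Definition zsign (k : 'I_(2 ^ t)) : K := if qbit j k then -1 else 1.

Lemma qflip_ordK : involutive qflip_ord.
Proof. by move=> k; apply/val_inj; rewrite /= qflipK. Qed.

Lemma eq_qflip_ord i k : (i == qflip_ord k) = (k == qflip_ord i).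
Proof. by apply/eqP/eqP => ->; rewrite qflip_ordK. Qed.

Lemma qubitX_entry i k : X i k = (i == qflip_ord k)%:R.
Proof.
rewrite pauli_stringE (eq_bigr (fun l : 'I_t =>
  (if l == j then qbit l i != qbit l k else qbit l i == qbit l k)%:R)) => [|l _];
  last by case: (l == j).
rewrite prodr_bool; congr (nat_of_bool _)%:R; apply/allP/eqP => [eq_ik|-> l _].
  apply/val_inj/(eq_qbits (ltn_ord i) (ltn_ord (qflip_ord k))) => l lt_lt.
  have := eq_ik (Ordinal lt_lt) (mem_index_enum _); rewrite /= qbit_qflip.
  have -> : (Ordinal lt_lt == j) = (l == j) by [].
  by case: eqP => [->|_ /eqP //]; case: (qbit j i); case: (qbit j k).
rewrite /= qbit_qflip (_ : (l == j) = (val l == val j)) //.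
by case: eqP => [->|_] //; case: (qbit j k).
Qed.

Lemma qubitZ_entry i k : Z i k = (i == k)%:R * zsign k.
Proof.
rewrite pauli_stringE (eq_bigr (fun l : 'I_t =>
  (qbit l i == qbit l k)%:R * (if (l == j) && qbit l k then -1 else 1))) => [|l _]; last first.
  case: (l == j); rewrite /sigma /= ?mulr1 //.
  by case: (qbit l i); case: (qbit l k); rewrite /= ?mul1r ?mul0r.
rewrite big_split /= prodr_bool; congr ((nat_of_bool _)%:R * _).
  apply/allP/eqP => [eq_ik|-> //].
  apply/val_inj/(eq_qbits (ltn_ord i) (ltn_ord k)) => l lt_lt.
  exact/eqP/(eq_ik (Ordinal lt_lt) (mem_index_enum _)).
by rewrite (bigD1 j) //= eqxx big1 ?mulr1 // => l /negbTE ->.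
Qed.

Lemma mulmx_qubitX (W : 'M[K]_(2 ^ t)) i k : (W *m X) i k = W i (qflip_ord k).
Proof.
rewrite mxE (bigD1 (qflip_ord k)) //= qubitX_entry eqxx mulr1 big1 ?addr0 // => m neq_m.
by rewrite qubitX_entry (negbTE neq_m) mulr0.
Qed.

Lemma mulqubitX_mx (W : 'M[K]_(2 ^ t)) i k : (X *m W) i k = W (qflip_ord i) k.
Proof.
rewrite mxE (bigD1 (qflip_ord i)) //= qubitX_entry eq_qflip_ord eqxx mul1r.
rewrite big1 ?addr0 // => m neq_m.
by rewrite qubitX_entry eq_qflip_ord (negbTE neq_m) mul0r.
Qed.

Lemma mulmx_qubitZ (W : 'M[K]_(2 ^ t)) i k : (W *m Z) i k = W i k * zsign k.
Proof.
rewrite mxE (bigD1 k) //= qubitZ_entry eqxx mul1r big1 ?addr0 // => m neq_m.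
by rewrite qubitZ_entry (negbTE neq_m) mul0r mulr0.
Qed.

Lemma mulqubitZ_mx (W : 'M[K]_(2 ^ t)) i k : (Z *m W) i k = zsign i * W i k.
Proof.
rewrite mxE (bigD1 i) //= qubitZ_entry eqxx mul1r big1 ?addr0 // => m neq_m.
by rewrite qubitZ_entry eq_sym (negbTE neq_m) !mul0r.
Qed.

Lemma acts_triviallyP (W : 'M[K]_(2 ^ t)) :
  acts_trivially_on W j <-> W *m X = X *m W /\ W *m Z = Z *m W.
Proof.
split=> [[W' eqW]|[commX commZ]].
  split; apply/matrixP => i k.
    rewrite mulmx_qubitX mulqubitX_mx !eqW /= !qclear_qflip !qbit_qflip eqxx.
    by case: (qbit j i); case: (qbit j k).
  rewrite mulmx_qubitZ mulqubitZ_mx eqW /zsign.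
  by case: (qbit j i); case: (qbit j k); rewrite /= ?mul0r ?mulr0 // mulrC.
pose ord_mod x : 'I_(2 ^ t) := Ordinal (ltn_pmod x (expn_gt0 2 t)).
have ord_modK (k : 'I_(2 ^ t)) : ord_mod k = k by apply/val_inj; rewrite /= modn_small.
have ord_mod_qflip (k : 'I_(2 ^ t)) : ord_mod (qflip j k) = qflip_ord k.
  by apply/val_inj; rewrite /= modn_small // (qflip_lt (ltn_ord j) (ltn_ord k)).
have W_qflip (k l : 'I_(2 ^ t)) : W (qflip_ord k) (qflip_ord l) = W k l.
  have := congr1 (fun M : 'M[K]_(2 ^ t) => M k (qflip_ord l)) commX.
  by rewrite /= mulmx_qubitX mulqubitX_mx qflip_ordK.
exists (fun x y => W (ord_mod x) (ord_mod y)) => i k; rewrite !qclearE.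
case: (qbit j i =P qbit j k) => [eq_ik|neq_ik].
  by rewrite mul1r eq_ik; case: (qbit j k); rewrite ?ord_mod_qflip ?ord_modK.
rewrite mul0r; apply/eqP; rewrite -eqNr; apply/eqP.
have := congr1 (fun M : 'M[K]_(2 ^ t) => M i k) commZ; rewrite /= mulmx_qubitZ mulqubitZ_mx /zsign.
move: neq_ik; case: (qbit j i); case: (qbit j k) => //= _.
  by rewrite mulr1 mulN1r => /esym.
by rewrite mulrN1 mul1r.
Qed.

End SingleQubitOperators.

Section ScalarCommutation.
Variables (R : comUnitRingType) (n : nat).
Implicit Types A B X : 'M[R]_n.

Lemma scalar_commM A B X a b :
  A *m X = a *: (X *m A) -> B *m X = b *: (X *m B) ->
  (A *m B) *m X = (a * b) *: (X *m (A *m B)).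
Proof.
move=> commA commB.
by rewrite -mulmxA commB -scalemxAr mulmxA (mulmxA A X B) commA -scalemxAl scalerA mulrC.
Qed.

Lemma scalar_commV A B X a :
  A *m X = a *: (X *m A) -> A *m B = 1%:M -> a * a = 1 -> B *m X = a *: (X *m B).
Proof.
move=> commA AB1 aa1; have BA1 := mulmx1C AB1.
have commA' : X *m A = a *: (A *m X) by rewrite commA scalerA aa1 scale1r.
rewrite -[B *m X]mulmx1 -AB1 (mulmxA (B *m X) A B) -(mulmxA B X A) commA'.
by rewrite -scalemxAr -scalemxAl (mulmxA B A X) BA1 mul1mx.
Qed.

End ScalarCommutation.

Section Commutator.
Variables (K : numClosedFieldType) (t : nat).
Implicit Types C P : 'M[K]_(2 ^ t).

Definition commutator_mx C P := C *m P *m adjmx C *m adjmx P.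

Lemma commutator_mxK C P : unitary C -> unitary P ->
  commutator_mx C P *m P *m C = C *m P.
Proof.
move=> uC uP.
rewrite /commutator_mx -(mulmxA _ (adjmx P)) unitaryV // mulmx1.
by rewrite -mulmxA unitaryV // mulmx1.
Qed.

Lemma ipauli_commutator C P : is_clifford C -> ipauli P -> ipauli (commutator_mx C P).
Proof.
move=> [_ cliffC] pP; apply: ipauliM (ipauli_adj pP).
exact/is_pauliP/cliffC/is_pauliP.
Qed.

Lemma commutator_comm C P : is_clifford C -> ipauli (C *m C) -> ipauli P ->
  commutator_mx C P *m C = C *m commutator_mx C P \/
  commutator_mx C P *m C = - (C *m commutator_mx C P).
Proof.
move=> cliffC pCC pP; set Q := commutator_mx C P; have uC := cliffC.1.
have [m CCP] := ipauli_comm pCC pP.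
have [m' adjQ] := adjmx_ipauli (ipauli_commutator cliffC pP).
have adjQC : adjmx Q *m C = P *m C *m adjmx P.
  by rewrite !adjmxM !adjmxK !mulmxA -(mulmxA _ (adjmx C) C) unitaryV // mulmx1.
have CQ : C *m Q = (-1) ^+ m *: (adjmx Q *m C).
  rewrite adjQC /Q /commutator_mx !mulmxA CCP -!scalemxAl; congr (_ *: _).
  by rewrite !mulmxA -(mulmxA (P *m C) C) uC mulmx1.
have : Q *m C = (-1) ^+ (m + m') *: (C *m Q).
  rewrite CQ adjQ -scalemxAl !scalerA -!exprD -signr_odd.
  by rewrite (_ : _ + _ + _ + _ = (m + m').*2)%N ?odd_double ?scale1r //; lia.
by rewrite -signr_odd; case: odd => ->; [right; rewrite scaleN1r | left; rewrite scale1r].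
Qed.

Lemma acts_trivially_commutator C P (j : 'I_t) :
  unitary C -> ipauli P -> acts_trivially_on C j ->
  acts_trivially_on (commutator_mx C P) j.
Proof.
move=> uC pP /acts_triviallyP [commXC commZC]; apply/acts_triviallyP.
suff commQ X : ipauli X -> C *m X = X *m C ->
    commutator_mx C P *m X = X *m commutator_mx C P.
  by split; apply: commQ => //; apply: ipauli_qubit.
move=> pX commC; have [s commP] := ipauli_comm pP pX.
have commC1 : C *m X = 1 *: (X *m C) by rewrite scale1r.
have ss1 : (-1) ^+ s * (-1) ^+ s = 1 :> K by rewrite -expr2 sqrr_sign.
have commCP := scalar_commM commC1 commP.
have commCPC' := scalar_commM commCP (scalar_commV commC1 uC (mulr1 1)).
have := scalar_commM commCPC' (scalar_commV commP (ipauli_unitary pP) ss1).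
by rewrite mul1r mulr1 ss1 scale1r.
Qed.

End Commutator.

Lemma ctrl_idtens_conj (K : numClosedFieldType) t (C P Q : 'M[K]_(2 ^ t)) :
  Q *m P *m C = C *m P -> ctrl C *m idtens P = ctrl Q *m idtens P *m ctrl C.
Proof.
move=> QPC.
by rewrite /ctrl /idtens !mulmx_block !(mul1mx, mulmx1, mul0mx, mulmx0, addr0, add0r) QPC.
Qed.

Theorem proposition2 (K : numClosedFieldType) (t : nat) (C P : 'M[K]_(2 ^ t)) :
  is_psc C -> is_pauli P ->
  exists Q : 'M[K]_(2 ^ t),
    [/\ is_pauli Q,
        ctrl C *m idtens P = ctrl Q *m idtens P *m ctrl C,
        Q *m C = C *m Q \/ Q *m C = - (C *m Q)
      & forall j : 'I_t, in_supp Q j -> in_supp C j].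
Proof.
move=> [cliffC [_ /is_pauliP pCC]] /is_pauliP pP.
exists (commutator_mx C P); split.
- exact/is_pauliP/ipauli_commutator.
- by apply/ctrl_idtens_conj/commutator_mxK; [case: cliffC | apply: ipauli_unitary].
- exact: commutator_comm.
- by move=> j suppQ trivC; apply/suppQ/acts_trivially_commutator => //; case: cliffC.
Qed.
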